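(* Let $A\in\mathbb{C}^{N\times N}$, let $\mu\in\mathbb{C}$, and let $\tilde A=A-\mu I$ have singular value decomposition $\tilde A=\sum_j\tilde\sigma_j|u_j\rangle\langle v_j|$ (right singular vectors $|v_j\rangle$). For $\varepsilon>0$ let $\Pi^{(\tilde A)}_{\varepsilon}=\sum_{j:\tilde\sigma_j\leq\varepsilon}|v_j\rangle\langle v_j|$. Let $(\lambda,|v\rangle)$ be any eigenvalue–eigenvector pair of $A$ with $\||v\rangle\|=1$, let $|\psi\rangle$ be any unit vector, and let $\gamma>0$. If $|\langle v|\psi\rangle|\geq2\gamma$ and $|\mu-\lambda|\leq\varepsilon\gamma$, then $\left\|\Pi^{(\tilde A)}_{\varepsilon}|\psi\rangle\right\|\geq\gamma$. *)

(* matrices over an arbitrary numeric algebraically closed field C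
   (e.g. complex numbers). *)
From HB Require Import structures.
From mathcomp Require Import all_boot all_order all_algebra.
Set Implicit Arguments. Unset Strict Implicit. Unset Printing Implicit Defensive.
Import Order.TTheory GRing.Theory Num.Theory.
Local Open Scope ring_scope.

Section Defs.
Variable C : numClosedFieldType.

Definition adjmx m n (A : 'M[C]_(m, n)) : 'M[C]_(n, m) :=
  \matrix_(i, j) (A j i)^*.

Definition unitarymx n (V : 'M[C]_n) : Prop := adjmx V *m V = 1%:M.

Definition cinner n (v w : 'cV[C]_n) : C := \sum_i (v i 0)^* * w i 0.

Definition vnorm n (v : 'cV[C]_n) : C := sqrtC (cinner v v).

(* Singular value decomposition A = sum_j s_j |u_j><v_j| with u_j = col j U,
   v_j = col j V (full SVD: N singular values, possibly zero). *)
Definition is_svd n (A U V : 'M[C]_n) (s : 'I_n -> C) : Prop :=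
  [/\ unitarymx U, unitarymx V, (forall j, 0 <= s j) &
      A = \sum_j s j *: (col j U *m adjmx (col j V))].

Definition svd_proj n (V : 'M[C]_n) (s : 'I_n -> C) (eps : C) : 'M[C]_n :=
  \sum_(j | s j <= eps) col j V *m adjmx (col j V).

End Defs.

From Pilot Require Import Defs.
From HB Require Import structures.
From mathcomp Require Import all_boot all_order all_algebra.
From mathcomp Require Import ring.
Import Order.TTheory GRing.Theory Num.Theory.
Local Open Scope ring_scope.
Set Implicit Arguments. Unset Strict Implicit.

(** In the right singular basis write [a = V^* v] and [b = V^* psi].  Since
   [(A - mu) v = (lambda - mu) v], the weighted sum [\sum_j s_j^2 |a_j|^2] equals
   [|lambda - mu|^2 <= (eps gamma)^2], so by Chebyshev's inequality [a] has mass
   at most [gamma^2] on the singular values above [eps].  Splitting the overlap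
   [2 gamma <= \sum_j |a_j| |b_j|] along [s_j <= eps] and bounding each half by
   the scaled AM-GM inequality [2 gamma x y <= gamma^2 x^2 + y^2] (with the
   roles of [x], [y] swapped on the tail) gives
   [4 gamma^2 <= 3 gamma^2 + \sum_(s_j <= eps) |b_j|^2], and the last sum is the
   squared norm of [Pi_eps psi]. *)

Section SumInequalities.
Variables (R : numDomainType) (I : finType).

Lemma sum_sqr_le1 (z : I -> R) (P : pred I) : (forall i, 0 <= z i) ->
  \sum_i z i ^+ 2 <= 1 -> \sum_(i | P i) z i ^+ 2 <= 1.
Proof.
move=> z_ge0 z_le1; apply: le_trans z_le1; rewrite [leRHS](bigID P) /= lerDl.
by apply: sumr_ge0 => i _; rewrite exprn_ge0.
Qed.

Lemma chebyshev_sum_le (s x : I -> R) (eps g : R) :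
  0 < eps -> (forall i, 0 <= s i) -> (forall i, 0 <= x i) ->
  \sum_i s i ^+ 2 * x i <= (eps * g) ^+ 2 ->
  \sum_(i | ~~ (s i <= eps)) x i <= g ^+ 2.
Proof.
move=> eps_gt0 s_ge0 x_ge0 weighted_le.
rewrite -(ler_pM2l (exprn_gt0 2 eps_gt0)) -exprMn; apply: le_trans weighted_le.
rewrite mulr_sumr [leRHS](bigID (fun i => s i <= eps)) /= ler_wpDl //.
  by apply: sumr_ge0 => i _; rewrite mulr_ge0 ?exprn_ge0.
apply: ler_sum => i s_gt.
have eps_lt : eps < s i.
  by rewrite real_ltNge ?(gtr0_real eps_gt0) ?(ger0_real (s_ge0 i)).
by rewrite ler_wpM2r // lerXn2r ?nnegrE ?(ltW eps_gt0) ?(ltW eps_lt).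
Qed.

Lemma sqr_le_sum_of_overlap (P : pred I) (x y : I -> R) (g : R) :
  0 < g -> (forall i, 0 <= x i) -> (forall i, 0 <= y i) ->
  \sum_i x i ^+ 2 <= 1 -> \sum_i y i ^+ 2 <= 1 ->
  \sum_(i | ~~ P i) x i ^+ 2 <= g ^+ 2 -> 2 * g <= \sum_i x i * y i ->
  g ^+ 2 <= \sum_(i | P i) y i ^+ 2.
Proof.
move=> g_gt0 x_ge0 y_ge0 x_le1 y_le1 x_tail overlap.
have g_ge0 := ltW g_gt0.
have g2_ge0 : 0 <= g ^+ 2 by rewrite exprn_ge0.
have amgm u w : 0 <= u -> 0 <= w -> 2 * g * (u * w) <= g ^+ 2 * u ^+ 2 + w ^+ 2.
  move=> u_ge0 w_ge0; rewrite -exprMn.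
  rewrite [leLHS](_ : _ = g * u * w *+ 2); last by rewrite -mulr_natl; ring.
  by apply: real_leif_mean_square_scaled; apply: ger0_real; rewrite ?mulr_ge0.
have split_overlap : (2 * g) ^+ 2 <=
    g ^+ 2 * \sum_(i | P i) x i ^+ 2 + \sum_(i | P i) y i ^+ 2
    + (g ^+ 2 * \sum_(i | ~~ P i) y i ^+ 2 + \sum_(i | ~~ P i) x i ^+ 2).
  rewrite expr2 (le_trans (ler_wpM2l _ overlap)) ?mulr_ge0 //.
  rewrite mulr_sumr (bigID P) /= !mulr_sumr -!big_split /=.
  apply: lerD; apply: ler_sum => i _; first exact: amgm.
  by rewrite [x i * _]mulrC amgm.
have: (2 * g) ^+ 2 <= g ^+ 2 + \sum_(i | P i) y i ^+ 2 + (g ^+ 2 + g ^+ 2).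
  apply: (le_trans split_overlap); apply: lerD; apply: lerD => //;
    by rewrite -[leRHS]mulr1 ler_wpM2l // sum_sqr_le1.
have -> : (2 * g) ^+ 2 = g ^+ 2 + g ^+ 2 + (g ^+ 2 + g ^+ 2) by ring.
by rewrite lerD2r lerD2l.
Qed.

End SumInequalities.

Section InnerProduct.
Variable C : numClosedFieldType.

Lemma adjmxK m n (A : 'M[C]_(m, n)) : adjmx (adjmx A) = A.
Proof. by apply/matrixP => i j; rewrite !mxE conjCK. Qed.

Lemma adjmxM m n p (A : 'M[C]_(m, n)) (B : 'M[C]_(n, p)) :
  adjmx (A *m B) = adjmx B *m adjmx A.
Proof.
apply/matrixP => i j; rewrite !mxE rmorph_sum; apply: eq_bigr => k _.
by rewrite !mxE rmorphM mulrC.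
Qed.

(* [all_algebra] exports a different [unitarymx] (from spectral.v), hence the
   qualified name. *)
Lemma unitarymx_adj n (V : 'M[C]_n) : Defs.unitarymx V -> Defs.unitarymx (adjmx V).
Proof. by rewrite /Defs.unitarymx adjmxK => /mulmx1C. Qed.

Lemma cinnerE n (x y : 'cV[C]_n) : cinner x y = (adjmx x *m y) 0 0.
Proof. by rewrite mxE; apply: eq_bigr => i _; rewrite mxE. Qed.

Lemma cinner_unitarymx n (V : 'M[C]_n) (x y : 'cV[C]_n) :
  Defs.unitarymx V -> cinner (V *m x) (V *m y) = cinner x y.
Proof.
move=> V_unitary.
by rewrite !cinnerE adjmxM mulmxA -(mulmxA _ _ V) V_unitary mulmx1.
Qed.

Lemma cinner_self n (x : 'cV[C]_n) : cinner x x = \sum_i `|x i 0| ^+ 2.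
Proof. by apply: eq_bigr => i _; rewrite normCKC. Qed.

Lemma cinnerZZ n c (x : 'cV[C]_n) : cinner (c *: x) (c *: x) = `|c| ^+ 2 * cinner x x.
Proof.
rewrite /cinner mulr_sumr; apply: eq_bigr => i _.
by rewrite !mxE normCKC rmorphM; ring.
Qed.

Lemma cinner_diag_mx n (d : 'rV[C]_n) (x : 'cV[C]_n) :
  cinner (diag_mx d *m x) (diag_mx d *m x) = \sum_i `|d 0 i| ^+ 2 * `|x i 0| ^+ 2.
Proof.
by apply: eq_bigr => i _; rewrite mul_diag_mx !mxE !normCKC rmorphM; ring.
Qed.

Lemma norm_cinner_le n (x y : 'cV[C]_n) :
  `|cinner x y| <= \sum_i `|x i 0| * `|y i 0|.
Proof.
apply: le_trans (ler_norm_sum _ _ _) _; apply: ler_sum => i _.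
by rewrite normrM norm_conjC.
Qed.

Lemma vnorm_eq1 n (x : 'cV[C]_n) : vnorm x = 1 -> cinner x x = 1.
Proof. by move/(congr1 (fun r => r ^+ 2)); rewrite sqrtCK expr1n. Qed.

Lemma vnorm_ge n (x : 'cV[C]_n) g : 0 <= g -> g ^+ 2 <= cinner x x -> g <= vnorm x.
Proof.
move=> g_ge0 g2_le; rewrite -(sqrCK g_ge0) ler_sqrtC // nnegrE ?exprn_ge0 //.
by rewrite cinner_self sumr_ge0 // => i _; rewrite exprn_ge0.
Qed.

End InnerProduct.

Section SVD.
Variables (C : numClosedFieldType) (n : nat).

Lemma sum_outer_diag_mx (U W : 'M[C]_n) (c : 'I_n -> C) :
  \sum_j c j *: (col j U *m adjmx (col j W)) = U *m diag_mx (\row_j c j) *m adjmx W.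
Proof.
apply/matrixP => i k; rewrite summxE !mxE; apply: eq_bigr => j _.
rewrite !mxE big_ord1 !mxE (bigD1 j) //= big1 ?addr0 => [|l /negPf l_neq_j].
  by rewrite !mxE eqxx mulr1n; ring.
by rewrite !mxE l_neq_j mulr0n mulr0.
Qed.

Lemma cinner_unitary_diag (U : 'M[C]_n) (d : 'rV[C]_n) (x : 'cV[C]_n) :
  Defs.unitarymx U ->
  cinner (U *m diag_mx d *m x) (U *m diag_mx d *m x) =
  \sum_i `|d 0 i| ^+ 2 * `|x i 0| ^+ 2.
Proof. by move=> U_unitary; rewrite -mulmxA cinner_unitarymx // cinner_diag_mx. Qed.

Lemma svd_cinner (B U V : 'M[C]_n) (s : 'I_n -> C) (x : 'cV[C]_n) :
  is_svd B U V s ->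
  cinner (B *m x) (B *m x) = \sum_i s i ^+ 2 * `|(adjmx V *m x) i 0| ^+ 2.
Proof.
case=> U_unitary _ s_ge0 ->; rewrite sum_outer_diag_mx -mulmxA.
rewrite cinner_unitary_diag //; apply: eq_bigr => i _.
by rewrite mxE ger0_norm.
Qed.

Lemma svd_projE (V : 'M[C]_n) (s : 'I_n -> C) (eps : C) :
  svd_proj V s eps = V *m diag_mx (\row_j ((s j <= eps)%R%:R : C)) *m adjmx V.
Proof.
rewrite /svd_proj -sum_outer_diag_mx big_mkcond /=; apply: eq_bigr => j _.
by case: ifP => _; rewrite ?scale1r ?scale0r.
Qed.

Lemma svd_proj_cinner (V : 'M[C]_n) (s : 'I_n -> C) (eps : C) (x : 'cV[C]_n) :
  Defs.unitarymx V ->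
  cinner (svd_proj V s eps *m x) (svd_proj V s eps *m x) =
  \sum_(i | s i <= eps) `|(adjmx V *m x) i 0| ^+ 2.
Proof.
move=> V_unitary; rewrite svd_projE -mulmxA cinner_unitary_diag //.
rewrite [RHS]big_mkcond; apply: eq_bigr => i _; rewrite mxE.
by case: (s i <= eps); rewrite ?normr1 ?normr0 ?expr1n ?mul1r ?expr0n ?mul0r.
Qed.

End SVD.

Theorem lemma2 (C : numClosedFieldType) (N : nat) (A : 'M[C]_N) (mu : C)
  (U V : 'M[C]_N) (s : 'I_N -> C) (eps gamma lambda : C)
  (v psi : 'cV[C]_N) :
  is_svd (A - mu%:M) U V s ->
  0 < eps ->
  A *m v = lambda *: v -> vnorm v = 1 ->
  vnorm psi = 1 ->
  0 < gamma ->
  2 * gamma <= `|cinner v psi| ->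
  `|mu - lambda| <= eps * gamma ->
  gamma <= vnorm (svd_proj V s eps *m psi).
Proof.
move=> svdA eps_gt0 Av v_unit psi_unit gamma_gt0 overlap mu_near.
have [_ V_unitary s_ge0 _] := svdA.
have V'_unitary := unitarymx_adj V_unitary.
set a := adjmx V *m v; set b := adjmx V *m psi.
have coords_le1 x : vnorm x = 1 -> \sum_i `|(adjmx V *m x) i 0| ^+ 2 <= 1.
  by move/vnorm_eq1 => x_unit; rewrite -cinner_self cinner_unitarymx // x_unit.
have a_tail : \sum_(i | ~~ (s i <= eps)) `|a i 0| ^+ 2 <= gamma ^+ 2.
  apply: (chebyshev_sum_le eps_gt0 s_ge0) => [i|]; first exact: exprn_ge0.
  have shifted_eigen : (A - mu%:M) *m v = (lambda - mu) *: v.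
    by rewrite mulmxBl Av mul_scalar_mx scalerBl.
  rewrite -(svd_cinner _ svdA) shifted_eigen cinnerZZ vnorm_eq1 // mulr1 distrC.
  by rewrite lerXn2r ?nnegrE ?mulr_ge0 ?(ltW eps_gt0) ?(ltW gamma_gt0).
have overlap_coords : 2 * gamma <= \sum_i `|a i 0| * `|b i 0|.
  apply: le_trans overlap _.
  by rewrite -(cinner_unitarymx _ _ V'_unitary) norm_cinner_le.
apply: vnorm_ge (ltW gamma_gt0) _; rewrite svd_proj_cinner //.
apply: (sqr_le_sum_of_overlap gamma_gt0 _ _ (coords_le1 _ v_unit)
          (coords_le1 _ psi_unit) a_tail overlap_coords) => i; exact: normr_ge0.
Qed.
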